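(* Let a trained classification model have feature space $\Phi\subseteq\mathbb{R}^f$ and produce logits $z=Wx_\phi+b$ for a feature vector $x_\phi\in\Phi$, where $W\in\mathbb{R}^{n\times f}$, $b\in\mathbb{R}^n$, $n$ the number of classes. Let $x$ be an input whose feature vector $x_\phi$ has distance at least $\delta$ from the closest decision boundary in $\Phi$. Then $$\max\mathrm{softmax}(Wx_\phi+b)\;\ge\;\frac{e^{\delta\rho(W)}}{e^{\delta\rho(W)}+(n-1)},\qquad \rho(W)=\min_{i\ne j,\ i,j\in\{1,\dots,n\}}\|W[j]-W[i]\|_2.$$
   Context: $W[k]$ denotes the $k$-th row of $W$. The classification of an input is the index of its largest logit. The decision boundary between classes $i$ and $j$ is the set of $y\in\Phi$ with $W[i]y+b[i]=W[j]y+b[j]\ge W[k]y+b[k]$ for all $k\notin\{i,j\}$; the distance to the closest decision boundary is the Euclidean distance from $x_\phi$ to the union of the decision boundaries between the class of $x$ and the other classes. $\mathrm{softmax}(z)[k]=e^{z[k]}/\sum_{l}e^{z[l]}$.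
   Formalization: The feature space Φ is all of $\mathbb{R}^f$, so the decision boundaries, and the distance from $x_\phi$ to them, range over all y ∈ $\mathbb{R}^f$ rather than only over y ∈ Φ. The statement above fails without it. *)

From HB Require Import structures.
From mathcomp Require Import all_boot all_order all_algebra.
From mathcomp Require Import all_classical all_reals all_analysis.
Set Implicit Arguments. Unset Strict Implicit. Unset Printing Implicit Defensive.
Import Order.TTheory GRing.Theory Num.Theory.
Local Open Scope ring_scope.
Local Open Scope classical_set_scope.

Definition enorm (R : realType) (m p : nat) (A : 'M[R]_(m, p)) : R :=
  Num.sqrt (\sum_(i < m) \sum_(j < p) A i j ^+ 2).

Definition logit (R : realType) (n f : nat) (W : 'M[R]_(n, f)) (b : 'cV[R]_n)
  (y : 'cV[R]_f) (k : 'I_n) : R := (W *m y + b) k 0.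

Definition softmax (R : realType) (n : nat) (z : 'cV[R]_n) (k : 'I_n) : R :=
  expR (z k 0) / \sum_(l < n) expR (z l 0).

(* max_k softmax(z)[k]  (all entries are positive, so 0 is a neutral start) *)
Definition max_softmax (R : realType) (n : nat) (z : 'cV[R]_n) : R :=
  \big[Num.max/0]_(k < n) softmax z k.

Definition decision_boundary (R : realType) (n f : nat) (W : 'M[R]_(n, f))
  (b : 'cV[R]_n) (i j : 'I_n) : set 'cV[R]_f :=
  [set y | logit W b y i = logit W b y j /\
           forall k, k != i -> k != j -> logit W b y k <= logit W b y i].

Definition rho (R : realType) (n f : nat) (W : 'M[R]_(n, f)) : R :=
  inf [set enorm (row ij.2 W - row ij.1 W) |
        ij in [set ij : 'I_n * 'I_n | ij.1 != ij.2]].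

(* Moving the feature vector x from its class c in the direction d = W[j] - W[c]
   changes each logit difference z_k - z_c at the constant rate
   <W[k] - W[c], d>, which equals |d|^2 for k = j.  The first class k whose
   logit catches up with z_c does so after a step s <= (z_c - z_j) / |d|^2,
   at a point of the decision boundary between c and k whose distance to x is
   s |d|.  Hence z_c - z_j >= delta |W[j] - W[c]| >= delta rho(W) for every
   j <> c, and bounding each e^(z_j) by e^(z_c - delta rho(W)) in the softmax
   denominator gives the claim. *)
From HB Require Import structures.
From mathcomp Require Import all_boot all_order all_algebra.
From mathcomp Require Import all_classical all_reals all_analysis.
From mathcomp Require Import lra.
Set Implicit Arguments. Unset Strict Implicit. Unset Printing Implicit Defensive.
Import Order.TTheory GRing.Theory Num.Theory.
Local Open Scope ring_scope.

Lemma enorm_ge0 (R : realType) (m p : nat) (A : 'M[R]_(m, p)) : 0 <= enorm A.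
Proof. exact: sqrtr_ge0. Qed.

Lemma enormZ (R : realType) (m p : nat) (s : R) (A : 'M[R]_(m, p)) :
  enorm (s *: A) = `|s| * enorm A.
Proof.
rewrite /enorm -sqrtr_sqr -sqrtrM ?sqr_ge0 // mulr_sumr; congr Num.sqrt.
by apply: eq_bigr => i _; rewrite mulr_sumr; apply: eq_bigr => j _; rewrite mxE exprMn.
Qed.

Lemma enorm_tr (R : realType) (m p : nat) (A : 'M[R]_(m, p)) : enorm A^T = enorm A.
Proof.
rewrite /enorm exchange_big; congr Num.sqrt.
by apply: eq_bigr => i _; apply: eq_bigr => j _; rewrite mxE.
Qed.

Lemma mul_tr_vec_enorm (R : realType) (p : nat) (v : 'cV[R]_p) :
  (v^T *m v) 0 0 = enorm v ^+ 2.
Proof.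
rewrite sqr_sqrtr; last by do 2!apply: sumr_ge0 => ? _; apply: sqr_ge0.
by rewrite mxE; apply: eq_bigr => i _; rewrite big_ord1 mxE expr2.
Qed.

Lemma rho_ge0 (R : realType) (n f : nat) (W : 'M[R]_(n, f)) : 0 <= rho W.
Proof.
rewrite /rho; set S := (X in inf X).
have [->|/set0P S_neq0] := eqVneq S set0; first by rewrite inf0.
by apply: lb_le_inf => // _ [ij _ <-]; apply: enorm_ge0.
Qed.

Lemma rho_le_enorm (R : realType) (n f : nat) (W : 'M[R]_(n, f)) (i j : 'I_n) :
  i != j -> rho W <= enorm (row j W - row i W).
Proof.
move=> ij; apply: ge_inf; last by exists (i, j).
by exists 0 => _ [? _ <-]; apply: enorm_ge0.
Qed.

Section AffineClassifier.
Variables (R : realType) (n f : nat) (W : 'M[R]_(n, f)) (b : 'cV[R]_n).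

Local Notation z := (logit W b).

Lemma logit_line (x d : 'cV[R]_f) (s : R) (k : 'I_n) :
  z (x + s *: d) k = z x k + s * (W *m d) k 0.
Proof. by rewrite /logit mulmxDr -scalemxAr !mxE addrAC. Qed.

Lemma decision_boundary_on_ray (x d : 'cV[R]_f) (c j : 'I_n) :
  (forall k, z x k <= z x c) -> (W *m d) c 0 < (W *m d) j 0 ->
  exists k s, [/\ k != c, 0 <= s,
    s * ((W *m d) j 0 - (W *m d) c 0) <= z x c - z x j &
    decision_boundary W b c k (x + s *: d)].
Proof.
move=> zc_max; set a := fun k => (W *m d) k 0 - (W *m d) c 0.
have gap_line s k : z (x + s *: d) k - z (x + s *: d) c = s * a k - (z x c - z x k).
  by rewrite !logit_line /a; lra.
rewrite -subr_gt0 => aj_gt0.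
case: (arg_minP (fun k => (z x c - z x k) / a k) (aj_gt0 : j \in [pred k | 0 < a k])).
move=> k ak_gt0 s_min; have {}ak_gt0 : 0 < a k := ak_gt0.
pose s := (z x c - z x k) / a k.
have gap_ge0 l : 0 <= z x c - z x l by rewrite subr_ge0.
have s_ge0 : 0 <= s by rewrite divr_ge0 ?gap_ge0 ?ltW.
exists k, s; split=> //.
- by apply: contraTneq ak_gt0 => ->; rewrite /a subrr ltxx.
- by rewrite -ler_pdivlMr //; exact: s_min.
split=> [|l _ _].
  by apply/eqP; rewrite eq_sym -subr_eq0 gap_line /s divfK ?subrr // gt_eqF.
rewrite -subr_le0 gap_line subr_le0.
have [al_gt0|al_le0] := ltrP 0 (a l); first by rewrite -ler_pdivlMr // s_min.
by apply: le_trans (gap_ge0 l); apply: mulr_ge0_le0.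
Qed.

Lemma logit_gap_ge_dist (x : 'cV[R]_f) (c j : 'I_n) (delta : R) :
  (forall k, z x k <= z x c) ->
  (forall (k : 'I_n) (y : 'cV[R]_f), k != c ->
     decision_boundary W b c k y -> delta <= enorm (y - x)) ->
  j != c -> delta * enorm (row j W - row c W) <= z x c - z x j.
Proof.
move=> zc_max dist_ge jc; have gap_ge0 : 0 <= z x c - z x j by rewrite subr_ge0.
have [delta_le0|delta_gt0] := lerP delta 0.
  by apply: le_trans gap_ge0; rewrite mulr_le0_ge0 ?enorm_ge0.
set d := (row j W - row c W)^T.
have slope_j : (W *m d) j 0 - (W *m d) c 0 = enorm d ^+ 2.
  by rewrite -mul_tr_vec_enorm trmxK mulmxBl [RHS]mxE -!row_mul !mxE.
have -> : enorm (row j W - row c W) = enorm d by rewrite enorm_tr.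
have [->|d_neq0] := eqVneq (enorm d) 0; first by rewrite mulr0.
have d_gt0 : 0 < enorm d by rewrite lt_def d_neq0 enorm_ge0.
have [|k [s [kc s_ge0 s_le boundary]]] := decision_boundary_on_ray (d := d) (j := j) zc_max.
  by rewrite -subr_gt0 slope_j exprn_gt0.
apply: le_trans s_le; rewrite slope_j expr2 mulrA ler_pM2r //.
by have := dist_ge k _ kc boundary; rewrite addrC addKr enormZ ger0_norm.
Qed.

End AffineClassifier.

Lemma softmax_ge_of_gap (R : realType) (n : nat) (z : 'cV[R]_n) (c : 'I_n) (t : R) :
  (forall j, j != c -> t <= z c 0 - z j 0) ->
  expR t / (expR t + (n%:R - 1)) <= softmax z c.
Proof.
move=> gap_ge; rewrite /softmax (bigD1 c) //=.
set q := \sum_(l | l != c) _.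
have n_gt0 : (0 < n)%N := leq_ltn_trans (leq0n c) (ltn_ord c).
have q_ge0 : 0 <= q by apply: sumr_ge0 => l _; apply: expR_ge0.
have q_le : expR t * q <= (n%:R - 1) * expR (z c 0).
  rewrite mulr_sumr; apply: le_trans (_ : \sum_(l | l != c) expR (z c 0) <= _).
    by apply: ler_sum => l lc; rewrite -expRD ler_expR -lerBrDr gap_ge.
  by rewrite sumr_const cardC1 card_ord -[_ *+ _]mulr_natl -subn1 natrB.
have et_gt0 := expR_gt0 t; have ec_gt0 := expR_gt0 (z c 0).
have n_ge1 : 1 <= n%:R :> R by rewrite ler1n.
rewrite ler_pdivrMr; last by lra.
by rewrite mulrAC ler_pdivlMr; [nra | lra].
Qed.

Lemma softmax_le_max (R : realType) (n : nat) (z : 'cV[R]_n) (k : 'I_n) :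
  softmax z k <= max_softmax z.
Proof. exact: le_bigmax. Qed.

Unset Implicit Arguments.

Theorem corollary1 (R : realType) (n f : nat) (W : 'M[R]_(n, f)) (b : 'cV[R]_n)
  (x_phi : 'cV[R]_f) (c : 'I_n) (delta : R) :
  (* c is the class of x: index of a largest logit *)
  (forall k : 'I_n, logit W b x_phi k <= logit W b x_phi c) ->
  (* distance from x_phi to the union of boundaries between c and other classes is >= delta *)
  (forall (j : 'I_n) (y : 'cV[R]_f), j != c ->
     decision_boundary W b c j y -> delta <= enorm (y - x_phi)) ->
  max_softmax (W *m x_phi + b) >=
    expR (delta * rho W) / (expR (delta * rho W) + (n%:R - 1)).
Proof.
move=> zc_max dist_ge; apply: le_trans (softmax_le_max _ c).
apply: softmax_ge_of_gap => j jc.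
have [delta_le0|delta_gt0] := lerP delta 0.
  apply: le_trans (_ : 0 <= _); first by rewrite mulr_le0_ge0 ?rho_ge0.
  by rewrite subr_ge0; apply: zc_max.
apply: le_trans (logit_gap_ge_dist zc_max dist_ge jc).
by apply: ler_wpM2l; [exact: ltW | apply: rho_le_enorm; rewrite eq_sym].
Qed.
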